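(* Let $\epsilon>0$, $\beta>0$, $K,T\in\mathbb N_+$ and $N\ge 3KT^2/\beta$. For any $\epsilon$-differentially private online learner $\mathcal A$ of $\mathrm{Point}_N$ whose outputs always lie in $\mathrm{Point}^K_N$, there exists an adversary $\mathcal B$ such that $$\mathbb E[M_{\mathcal A}]=\Omega\left(\min\left(\frac{\log(T/\beta)}{\epsilon},\,T\right)\right).$$
   Context: $\mathrm{Point}_N=\{f^{(i)}:i\in[N]\}$ on domain $[N]$ with $f^{(i)}(x)=\mathbb 1\{x=i\}$; $\mathrm{Point}^K_N$ is the class of functions $[N]\to\{0,1\}$ equal to $1$ on at most $K$ points. Online game: an oblivious adversary picks $f^*\in\mathrm{Point}_N$ and $x_1,\dots,x_T\in[N]$; for $t=1,\dots,T$ the randomized learner outputs $\hat f_t$ depending only on the first $t-1$ labelled pairs, then receives $(x_t,f^*(x_t))$; $M_{\mathcal A}=\sum_t\mathbb 1\{\hat f_t(x_t)\ne f^*(x_t)\}$, expectation over the learner's randomness. $\epsilon$-DP: for any two labelled input sequences $\tau,\tau'$ differing in exactly one position and any set $S$ of output sequences of predictors, $\Pr(\mathcal A(\tau)\in S)\le e^{\epsilon}\Pr(\mathcal A(\tau')\in S)$. *)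

From HB Require Import structures.
From mathcomp Require Import all_boot all_order all_algebra.
From mathcomp Require Import reals.
From mathcomp Require Import sequences.
From mathcomp.analysis Require Import exp.
Set Implicit Arguments. Unset Strict Implicit. Unset Printing Implicit Defensive.
Import Order.TTheory GRing.Theory Num.Theory.
Local Open Scope ring_scope.

Definition predictor (N : nat) := {ffun 'I_N -> bool}.

Definition point (N : nat) (i : 'I_N) : predictor N := [ffun x => x == i].

Definition in_PointK (N K : nat) (h : predictor N) : bool :=
  (#|[set x | h x]| <= K)%N.

Definition lab_seq (N T : nat) := {ffun 'I_T -> 'I_N * bool}.
Definition out_seq (N T : nat) := {ffun 'I_T -> predictor N}.

(* A randomized learner: for every labelled input sequence, a probability
   distribution (pmf) on the finite set of output sequences. *)
Definition learner (R : realType) (N T : nat) :=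
  lab_seq N T -> {ffun out_seq N T -> R}.

Definition is_distr_learner (R : realType) N T (A : learner R N T) : Prop :=
  forall tau, (forall o, 0 <= A tau o) /\ \sum_(o : out_seq N T) A tau o = 1.

(* online: the joint law of (hat f_1, ..., hat f_t) depends only on the
   first t-1 labelled pairs (indices s < t, 0-based) *)
Definition is_online (R : realType) N T (A : learner R N T) : Prop :=
  forall (t : 'I_T) (tau tau' : lab_seq N T),
    (forall s : 'I_T, (s < t)%N -> tau s = tau' s) ->
    forall u : out_seq N T,
      \sum_(o : out_seq N T | [forall s : 'I_T, (s <= t)%N ==> (o s == u s)]) A tau o =
      \sum_(o : out_seq N T | [forall s : 'I_T, (s <= t)%N ==> (o s == u s)]) A tau' o.

Definition outputs_in_PointK (R : realType) N T K (A : learner R N T) : Prop :=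
  forall tau o, A tau o != 0 -> forall t, in_PointK K (o t).

Definition is_DP (R : realType) N T (eps : R) (A : learner R N T) : Prop :=
  forall tau tau' : lab_seq N T,
    #|[set t | tau t != tau' t]| = 1%N ->
    forall S : {set out_seq N T},
      \sum_(o in S) A tau o <= expR eps * \sum_(o in S) A tau' o.

(* the labelled sequence produced by the oblivious adversary (f^(i), xs) *)
Definition adv_input N T (i : 'I_N) (xs : {ffun 'I_T -> 'I_N}) : lab_seq N T :=
  [ffun t => (xs t, point i (xs t))].

Definition mistakes N T (i : 'I_N) (xs : {ffun 'I_T -> 'I_N}) (o : out_seq N T) : nat :=
  \sum_(t : 'I_T) (o t (xs t) != point i (xs t)).

Definition exp_mistakes (R : realType) N T (A : learner R N T)
    (i : 'I_N) (xs : {ffun 'I_T -> 'I_N}) : R :=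
  \sum_(o : out_seq N T) A (adv_input i xs) o * (mistakes i xs o)%:R.

From HB Require Import structures.
From mathcomp Require Import all_boot all_order all_algebra.
From mathcomp Require Import reals sequences.
From mathcomp.analysis Require Import exp.
From mathcomp Require Import lra.
Set Implicit Arguments. Unset Strict Implicit. Unset Printing Implicit Defensive.
Import Order.TTheory GRing.Theory Num.Theory.
Local Open Scope ring_scope.

(* Run the learner on the all-zero input (x0, 0), ..., (x0, 0).  Every output
   predictor has at most K ones, so the expected number of pairs (t, x) with
   hat f_t(x) = 1 is at most T K, and some point x is labelled 1 with total
   probability at most T K / N.  The adversary f* = f^(x) queries x in every
   round.  Since hat f_t only sees the first t inputs, which differ from the
   all-zero input in t positions, group privacy gives
   P[hat f_t(x) = 1] <= e^(t eps) T K / N <= T^2 K / (beta N) <= 1/3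
   in every round t <= ln(T/beta)/eps; each of these rounds is a mistake with
   probability at least 2/3. *)

Section Splice.
Variables (N T : nat).
Implicit Types (tau rho : lab_seq N T).

Definition splice tau rho (s : nat) : lab_seq N T :=
  [ffun t : 'I_T => if (t < s)%N then tau t else rho t].

Lemma splice0 tau rho : splice tau rho 0 = rho.
Proof. by apply/ffunP => t; rewrite ffunE. Qed.

Lemma card_splice_step tau rho (i : 'I_T) : tau i != rho i ->
  #|[set t | splice tau rho i.+1 t != splice tau rho i t]| = 1%N.
Proof.
move=> neq_i; rewrite -(cards1 i); apply: eq_card => t.
rewrite !inE !ffunE ltnS leq_eqVlt -val_eqE.
by case: ltngtP => [||/val_inj ->]; rewrite ?eqxx.
Qed.

Lemma DP_splice (R : realType) (eps : R) (A : learner R N T) tau rho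
    (S : {set out_seq N T}) (s : nat) :
  is_DP eps A -> (forall t, tau t != rho t) -> (s <= T)%N ->
  \sum_(o in S) A (splice tau rho s) o
    <= expR (s%:R * eps) * \sum_(o in S) A rho o.
Proof.
move=> dpA neq_tau; elim: s => [|s IHs] le_sT.
  by rewrite splice0 mul0r expR0 mul1r.
apply: le_trans (dpA _ _ (card_splice_step (neq_tau (Ordinal le_sT))) S) _.
rewrite -natr1 mulrDl mul1r addrC expRD -mulrA ler_wpM2l ?expR_ge0 //.
exact: IHs (ltnW le_sT).
Qed.

End Splice.

Section Online.
Variables (N T : nat) (t : 'I_T).
Implicit Types (o u : out_seq N T).

Definition truncate o : out_seq N T :=
  [ffun s : 'I_T => if (s <= t)%N then o s else [ffun=> false]].

Definition agree_upto o u := [forall s : 'I_T, (s <= t)%N ==> (o s == u s)].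

Lemma truncate_idem o : truncate (truncate o) = truncate o.
Proof. by apply/ffunP => s; rewrite !ffunE; case: ifP => // ->. Qed.

Lemma truncate_eq o u :
  (truncate o == u) = (truncate u == u) && agree_upto o u.
Proof.
apply/eqP/andP => [<- | [/eqP trunc_u /forallP agree_ou]].
  split; first by rewrite truncate_idem.
  by apply/forallP => s; apply/implyP => le_st; rewrite ffunE le_st.
rewrite -trunc_u; apply/ffunP => s; rewrite !ffunE; case: ifP => // le_st.
by apply/eqP; rewrite (implyP (agree_ou s)).
Qed.

Lemma online_prefix_event (R : realType) (A : learner R N T)
    (P : pred (out_seq N T)) (tau rho : lab_seq N T) :
  is_online A -> (forall o, P (truncate o) = P o) ->
  (forall s : 'I_T, (s < t)%N -> tau s = rho s) ->
  \sum_(o | P o) A tau o = \sum_(o | P o) A rho o.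
Proof.
move=> onA P_trunc agree_tau.
(* {o | P o} is the disjoint union of the cylinders {o | agree_upto o u} over
   its truncated members u, and online-ness fixes the mass of each cylinder. *)
have by_prefix lam : \sum_(o | P o) A lam o =
    \sum_(u | P u && (truncate u == u)) \sum_(o | agree_upto o u) A lam o.
  rewrite (partition_big truncate (fun u => P u && (truncate u == u))) => [|o Po];
    last by rewrite P_trunc Po truncate_idem /=.
  apply: eq_bigr => u /andP [Pu /eqP trunc_u]; apply: eq_bigl => o.
  rewrite truncate_eq trunc_u eqxx /=.
  have [agree_ou|] := boolP (agree_upto o u); rewrite ?andbT ?andbF //.
  rewrite -P_trunc; suff -> : truncate o = u by [].
  by apply/eqP; rewrite truncate_eq trunc_u eqxx.
rewrite !by_prefix; apply: eq_bigr => u _; exact: onA.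
Qed.

End Online.

Lemma min_le_count (R : realType) (y : R) (T : nat) :
  Num.min y T%:R <= \sum_(t < T) (if t%:R <= y then 1 else 0 : R).
Proof.
elim: T => [|T IHT]; first by rewrite big_ord0 ge_min lexx orbT.
rewrite big_ord_recr /=; case: ifP => [le_Ty | /negbT].
  rewrite -natr1 ge_min lerD ?orbT //.
  by move: IHT; rewrite (min_idPr le_Ty).
rewrite -ltNge addr0 => lt_yT; apply: le_trans IHT.
by rewrite (min_idPl (ltW lt_yT)) ge_min lexx.
Qed.

Lemma mul_min_le_sum (R : realType) (T : nat) (y c : R) (f : 'I_T -> R) :
  0 <= c -> (forall t, 0 <= f t) -> (forall t : 'I_T, t%:R <= y -> c <= f t) ->
  c * Num.min y T%:R <= \sum_t f t.
Proof.
move=> c_ge0 f_ge0 early_f.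
apply: le_trans (ler_wpM2l c_ge0 (min_le_count y T)) _.
rewrite mulr_sumr; apply: ler_sum => t _.
by case: ifP => [/early_f|_]; rewrite ?mulr1 ?mulr0.
Qed.

Definition prob_label1 (R : realType) N T (A : learner R N T) (tau : lab_seq N T)
    (t : 'I_T) (x : 'I_N) : R :=
  \sum_(o : out_seq N T | o t x) A tau o.

Definition all_zero_input N T (x0 : 'I_N) : lab_seq N T := [ffun=> (x0, false)].

Section LowerBound.
Variables (R : realType) (N T K : nat) (eps : R) (A : learner R N T).
Hypotheses (distrA : is_distr_learner A) (onA : is_online A)
  (outA : outputs_in_PointK K A) (dpA : is_DP eps A).

Implicit Types (tau rho : lab_seq N T) (t : 'I_T) (x : 'I_N).

Local Notation prob1 := (prob_label1 A).

Lemma prob_label1_ge0 tau t x : 0 <= prob1 tau t x.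
Proof. by apply: sumr_ge0 => o _; case: (distrA tau). Qed.

Lemma prob_label1_le1 tau t x : prob1 tau t x <= 1.
Proof.
case: (distrA tau) => A_ge0 <-.
by rewrite [leRHS](bigID (fun o : out_seq N T => o t x)) /= lerDl sumr_ge0.
Qed.

Lemma online_prob_label1 tau rho t x :
  (forall s : 'I_T, (s < t)%N -> tau s = rho s) -> prob1 tau t x = prob1 rho t x.
Proof. by apply: online_prefix_event => // o; rewrite ffunE leqnn. Qed.

Lemma sum_prob_label1_le tau t : \sum_x prob1 tau t x <= K%:R.
Proof.
case: (distrA tau) => A_ge0 A_sum1.
have -> : K%:R = \sum_o A tau o * K%:R by rewrite -mulr_suml A_sum1 mul1r.
rewrite /prob_label1 (exchange_big_dep predT) //=.
apply: ler_sum => o _; rewrite sumr_const -[leLHS]mulr_natr.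
have [-> | A_neq0] := eqVneq (A tau o) 0; first by rewrite !mul0r.
rewrite ler_wpM2l // ler_nat -(cardsE (fun x => o t x)).
exact: outA A_neq0 t.
Qed.

Lemma exists_rarely_labelled (x0 : 'I_N) tau :
  exists x, N%:R * \sum_t prob1 tau t x <= (T * K)%:R.
Proof.
have [x _ min_x] := arg_minP (fun x => \sum_t prob1 tau t x) (isT : predT x0).
exists x; apply: le_trans (_ : \sum_x \sum_t prob1 tau t x <= _).
  rewrite -[N in N%:R](card_ord N) -sum1_card natr_sum mulr_suml.
  by apply: ler_sum => y _; rewrite mul1r min_x.
rewrite exchange_big natrM -[T in T%:R](card_ord T) -sum1_card natr_sum mulr_suml.
by apply: ler_sum => t _; rewrite mul1r sum_prob_label1_le.
Qed.

Lemma prob_label1_constant_le (x0 x : 'I_N) t :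
  prob1 (adv_input x [ffun=> x]) t x
    <= expR (t%:R * eps) * prob1 (all_zero_input T x0) t x.
Proof.
pose adv : lab_seq N T := adv_input x [ffun=> x].
have neq_adv t' : adv t' != all_zero_input T x0 t'.
  by rewrite !ffunE xpair_eqE eqxx andbF.
rewrite (@online_prob_label1 _ (splice adv (all_zero_input T x0) t)); last first.
  by move=> s lt_st; rewrite [RHS]ffunE lt_st.
have := DP_splice [set o : out_seq N T | o t x] dpA neq_adv (ltnW (ltn_ord t)).
by rewrite /prob_label1 !big_set.
Qed.

Lemma exp_mistakes_constant x :
  exp_mistakes A x [ffun=> x] = \sum_t (1 - prob1 (adv_input x [ffun=> x]) t x).
Proof.
rewrite /exp_mistakes /mistakes; under eq_bigr do rewrite natr_sum mulr_sumr.
rewrite exchange_big; apply: eq_bigr => t _.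
case: (distrA (adv_input x [ffun=> x])) => _ A_sum1.
rewrite -[X in _ = X - _]A_sum1 /prob_label1 [X in _ - X]big_mkcond -sumrB.
apply: eq_bigr => o _.
by rewrite !ffunE eqxx; case: (o t x); rewrite ?mulr0 ?mulr1 ?subrr ?subr0.
Qed.

Lemma early_prob_label1_le (x0 x : 'I_N) t (beta : R) :
  0 < beta -> (3 * K * T ^ 2)%:R / beta <= N%:R ->
  N%:R * \sum_s prob1 (all_zero_input T x0) s x <= (T * K)%:R ->
  expR (t%:R * eps) <= T%:R / beta ->
  prob1 (adv_input x [ffun=> x]) t x <= 1 / 3.
Proof.
move=> beta_gt0 N_large rare_x exp_t_le.
set p0 := prob1 (all_zero_input T x0) t x.
have p0_ge0 : 0 <= p0 by exact: prob_label1_ge0.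
have Np0_le : N%:R * p0 <= (T * K)%:R.
  apply: le_trans rare_x; rewrite ler_wpM2l // (bigD1 t) //= lerDl.
  by rewrite sumr_ge0 // => s _; exact: prob_label1_ge0.
have N_gt0 : 0 < N%:R :> R by rewrite ltr0n (leq_ltn_trans _ (ltn_ord x)).
apply: le_trans (prob_label1_constant_le x0 x t) _.
rewrite -(ler_pM2l N_gt0) mulrCA.
apply: le_trans (_ : N%:R * p0 * (T%:R / beta) <= _).
  by rewrite mulrC ler_wpM2l ?mulr_ge0.
apply: le_trans (_ : (T * K)%:R * (T%:R / beta) <= _).
  by apply: ler_wpM2r => //; rewrite divr_ge0 // ltW.
rewrite ler_pdivrMr // !natrM in N_large.
rewrite mulrA ler_pdivrMr // !natrM; nra.
Qed.

End LowerBound.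

Theorem corollary3 :
  forall R : realType, exists c : R, 0 < c /\
  forall (eps beta : R) (K T N : nat),
    0 < eps -> 0 < beta -> (0 < K)%N -> (0 < T)%N ->
    (3 * K * T ^ 2)%:R / beta <= N%:R ->
    forall A : learner R N T,
      is_distr_learner A -> is_online A -> outputs_in_PointK K A ->
      is_DP eps A ->
      exists (i : 'I_N) (xs : {ffun 'I_T -> 'I_N}),
        c * Num.min (ln (T%:R / beta) / eps) T%:R <= exp_mistakes A i xs.
Proof.
move=> R; exists (2 / 3); split=> [|eps]; first by rewrite divr_gt0.
move=> beta K T N eps_gt0 beta_gt0 K_gt0 T_gt0 N_large A distrA onA outA dpA.
have N_gt0 : (0 < N)%N.
  rewrite -(ltr0n R); apply: lt_le_trans N_large.
  by rewrite divr_gt0 // ltr0n !muln_gt0 K_gt0 T_gt0.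
pose x0 : 'I_N := Ordinal N_gt0.
have [x rare_x] := exists_rarely_labelled distrA outA x0 (all_zero_input T x0).
exists x, [ffun=> x]; rewrite exp_mistakes_constant //.
apply: mul_min_le_sum => [|t|t early_t]; first by rewrite divr_ge0.
  by rewrite subr_ge0 prob_label1_le1.
have exp_t_le : expR (t%:R * eps) <= T%:R / beta.
  rewrite -[leRHS]lnK ?posrE ?divr_gt0 ?ltr0n // ler_expR -ler_pdivlMr //.
have := early_prob_label1_le distrA onA dpA beta_gt0 N_large rare_x exp_t_le.
lra.
Qed.
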